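(* Let $d,e\in\mathbb{N}$ and set $n=2$, $m=d+2$. Assume that the Padé matrix $P_T$ of $\mathcal{T}^2_{d,e,d+2}$ is square, i.e. $\binom{e+2}{2}=\binom{d+4}{2}-\binom{d+2}{2}=2d+5$. Let $f=\det(P_T)\in\mathbb{C}[c_\gamma : 0\le|\gamma|\le d+2]$. If $\mathcal{T}^2_{d,e,d+2}=V(f)$ and $\mathcal{T}^2_{d,e,d+2}$ is a non-defective hypersurface of $\mathbb{P}^N$, $N=\binom{d+4}{2}-1$, then the Hessian of $f$ vanishes identically: $h_f=\det\left(\frac{\partial^2 f}{\partial c_\gamma\,\partial c_\delta}\right)_{0\le|\gamma|,|\delta|\le d+2}\equiv 0$.
   Context: Notation: $x=(x_1,\dots,x_n)$, multi-indices $\gamma\in\mathbb{N}^n$, $x^\gamma=x_1^{\gamma_1}\cdots x_n^{\gamma_n}$, $|\gamma|=\gamma_1+\dots+\gamma_n$. Taylor variety: for $P,Q\in\mathbb{C}[x]$ with $P(0)=Q(0)=1$, $\deg P\le d$, $\deg Q\le e$, write the Taylor expansion at the origin $P/Q=1+\sum_{0<|\gamma|\le m}c_\gamma x^\gamma+(\text{terms of order}\ge m+1)$. This defines a map $\psi:\mathbb{C}^{\binom{d+n}{n}-1}\times\mathbb{C}^{\binom{e+n}{n}-1}\to\mathbb{C}^{\binom{n+m}{n}-1}$, $(P,Q)\mapsto(c_\gamma)_{0<|\gamma|\le m}$. The Taylor variety $\mathcal{T}^n_{d,e,m}$ is the projective closure of the image of $\psi$ in $\mathbb{P}^N$, $N=\binom{n+m}{n}-1$,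 with homogeneous coordinates $[c_\gamma]_{0\le|\gamma|\le m}$ (it is irreducible). Its expected dimension is $\min\{\binom{d+n}{n}+\binom{e+n}{n}-2,\binom{m+n}{n}-1\}$; it is non-defective if its dimension equals the expected dimension. Padé matrix: for the generic polynomial $T=\sum_{0\le|\gamma|\le m}c_\gamma x^\gamma$, let $\varphi_T:\mathbb{C}[x]_{\le e}\to\operatorname{Span}\{x^\rho: d+1\le|\rho|\le m\}$ send $Q$ to the part of $QT$ supported on monomials of degree between $d+1$ and $m$. The Padé matrix $P_T$ is the matrix of $\varphi_T$ in monomial bases (columns indexed by monomials $x^\sigma$, $|\sigma|\le e$, rows by monomials $x^\rho$, $d+1\le|\rho|\le m$); its $(\rho,\sigma)$ entry is $c_{\rho-\sigma}$ if $\sigma\le\rho$ componentwise and $0$ otherwise. It has size $\left(\binom{m+n}{n}-\binom{d+n}{n}\right)\times\binom{e+n}{n}$, with entries linear forms in the $c_\gamma$. *)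

From HB Require Import structures.
From mathcomp Require Import all_boot all_order all_algebra.
From mathcomp Require Import mpoly.
From mathcomp Require Import reals.
From mathcomp Require Import complex.

Set Implicit Arguments.
Unset Strict Implicit.
Unset Printing Implicit Defensive.

Import Order.TTheory GRing.Theory Num.Theory.
Local Open Scope ring_scope.

Section TaylorVariety.
Variable C : fieldType.

Definition Mon (m : nat) := 'X_{1..2 < m.+1}.

Definition Kvars (m : nat) : nat := #|{: Mon m}|.

(* points of C^(N+1) (homogeneous coordinate vectors); c_gamma = x (enum_rank gamma) *)
Definition vec (m : nat) := 'I_(Kvars m) -> C.

Definition nonzero (k : nat) (x : 'I_k -> C) : Prop := exists i, x i != 0.

Definition trunc_series (m : nat) (x : vec m) : {mpoly C[2]} :=
  \sum_(g : Mon m) x (enum_rank g) *: 'X_[bmnm g].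

(* x = [1 : psi(P,Q)]: the Taylor expansion of P/Q at 0 up to order m is
   sum_{|gamma|<=m} x_gamma x^gamma, i.e. Q*T - P has no monomial of degree <= m
   (this forces x_0 = 1 since P(0)=Q(0)=1). *)
Definition is_taylor (d e m : nat) (P Q : {mpoly C[2]}) (x : vec m) : Prop :=
  [/\ (msize P <= d.+1)%N, (msize Q <= e.+1)%N, P@_0%MM = 1, Q@_0%MM = 1 &
      forall g : 'X_{1..2}, (mdeg g <= m)%N -> (Q * trunc_series x - P)@_g = 0].

Definition taylor_image (d e m : nat) (x : vec m) : Prop :=
  exists P Q : {mpoly C[2]}, @is_taylor d e m P Q x.

Definition homogeneous (k : nat) (p : {mpoly C[k]}) : Prop :=
  exists t : nat, p \is t.-homog.

(* projective (Zariski) closure in P^(k-1) of a set of points A, as a cone of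
   nonzero vectors: common zeros of all homogeneous polynomials vanishing on A *)
Definition proj_closure (k : nat) (A : ('I_k -> C) -> Prop) (x : 'I_k -> C) : Prop :=
  nonzero x /\
  forall p : {mpoly C[k]}, homogeneous p ->
    (forall a, A a -> p.@[a] = 0) -> p.@[x] = 0.

Definition taylor_variety (d e m : nat) : vec m -> Prop :=
  proj_closure (@taylor_image d e m).

Definition zero_set (k : nat) (f : {mpoly C[k]}) (x : 'I_k -> C) : Prop :=
  nonzero x /\ f.@[x] = 0.

Definition proj_closed (k : nat) (Z : ('I_k -> C) -> Prop) : Prop :=
  exists S : {mpoly C[k]} -> Prop, (forall p, S p -> homogeneous p) /\
    forall x, Z x <-> (nonzero x /\ forall p, S p -> p.@[x] = 0).

Definition psubset (k : nat) (Z1 Z2 : ('I_k -> C) -> Prop) : Prop :=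
  forall x, Z1 x -> Z2 x.

Definition proj_irreducible (k : nat) (Z : ('I_k -> C) -> Prop) : Prop :=
  [/\ proj_closed Z, exists x, Z x &
      forall Z1 Z2, proj_closed Z1 -> proj_closed Z2 ->
        (forall x, Z x -> Z1 x \/ Z2 x) -> psubset Z Z1 \/ psubset Z Z2].

Definition has_chain (k : nat) (X : ('I_k -> C) -> Prop) (l : nat) : Prop :=
  exists Zs : nat -> ('I_k -> C) -> Prop,
    (forall i, (i <= l)%N -> proj_irreducible (Zs i) /\ psubset (Zs i) X) /\
    (forall i, (i < l)%N -> psubset (Zs i) (Zs i.+1) /\ ~ psubset (Zs i.+1) (Zs i)).

Definition proj_dim (k : nat) (X : ('I_k -> C) -> Prop) (l : nat) : Prop :=
  has_chain X l /\ ~ has_chain X l.+1.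

(* variable c_g of C[c_gamma : |gamma| <= m] (0 if |g| > m) *)
Definition cvar (m : nat) (g : 'X_{1..2}) : {mpoly C[Kvars m]} :=
  if @insub _ (fun g : 'X_{1..2} => (mdeg g < m.+1)%N) (Mon m) g is Some g'
  then 'X_(enum_rank g') else 0.

Definition PadeRow (d m : nat) := {r : Mon m | (d < mdeg (bmnm r))%N}.

Definition pade_mx (d e m : nat) :
  'M[{mpoly C[Kvars m]}]_(#|{: PadeRow d m}|, #|{: Mon e}|) :=
  \matrix_(i, j)
    let r := bmnm (val (enum_val i)) in
    let s := bmnm (enum_val j) in
    if (s <= r)%MM then cvar m (r - s)%MM else 0.

Definition pade_det (d e m : nat) (Hsq : #|{: PadeRow d m}| = #|{: Mon e}|) :
  {mpoly C[Kvars m]} :=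
  \det (castmx (Hsq, erefl) (pade_mx d e m)).

Definition hessian (k : nat) (f : {mpoly C[k]}) : 'M[{mpoly C[k]}]_k :=
  \matrix_(i, j) mderiv i (mderiv j f).

End TaylorVariety.

Definition expected_dim (n d e m : nat) : nat :=
  minn ('C(d + n, n) + 'C(e + n, n) - 2) ('C(m + n, n) - 1).

(* Every row of the Pade matrix is indexed by a monomial of degree > d, every
   column by one of degree <= e, and squareness forces e <= d.  Hence no entry
   c_(rho - sigma) is the constant coefficient c_0, so f = det P_T does not
   involve c_0 and the c_0-row of its Hessian matrix is zero. *)

From HB Require Import structures.
From mathcomp Require Import all_boot all_order all_algebra.
From mathcomp Require Import mpoly.
From mathcomp Require Import reals complex.
From mathcomp Require Import zify.

Import GRing.Theory.
Local Open Scope ring_scope.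

Definition mnm2 (a b : nat) : 'X_{1..2} :=
  [multinom (if i == 0 :> nat then a else b) | i < 2].

Lemma mdeg_mnm2 a b : mdeg (mnm2 a b) = (a + b)%N.
Proof. by rewrite mdegE !big_ord_recl big_ord0 /= !mnmE /= addn0. Qed.

Lemma mdeg_mnm2_lt m k (i : 'I_k.+1) :
  (k <= m)%N -> (mdeg (mnm2 i (k - i)) < m.+1)%N.
Proof. by rewrite mdeg_mnm2 => km; have := ltn_ord i; lia. Qed.

Lemma card_Mon_mdeg_eq m k :
  (k <= m)%N -> #|[pred g : Mon m | mdeg g == k]| = k.+1.
Proof.
move=> km; pose mon (i : 'I_k.+1) : Mon m := BMultinom (mdeg_mnm2_lt m k i km).
have mon_inj : injective mon.
  by move=> i j /(congr1 (fun g : Mon m => bmnm g ord0)); rewrite /= !mnmE => /val_inj.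
rewrite -[in RHS](card_ord k.+1) -(card_image mon_inj).
apply: eq_card => g; rewrite !inE; apply/eqP/imageP => [degg | [i _ ->]]; last first.
  by rewrite /= mdeg_mnm2; have := ltn_ord i; lia.
have g0_lt : (g ord0 < k.+1)%N by rewrite -degg mdegE big_ord_recl; lia.
exists (Ordinal g0_lt) => //; apply/val_inj/mnmP => -[[|[|j]] lt_j2] //=; rewrite mnmE //=.
- by congr (g _); apply/val_inj.
- have -> : Ordinal lt_j2 = lift ord0 ord0 by apply/val_inj.
  by rewrite -degg mdegE !big_ord_recl big_ord0 /=; lia.
Qed.

Lemma card_Mon_mdeg m (P : pred nat) :
  #|[pred g : Mon m | P (mdeg g)]| = (\sum_(k < m.+1 | P k) k.+1)%N.
Proof.
rewrite -sum1_card.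
rewrite (partition_big (fun g : Mon m => Ordinal (bmdeg g)) (fun k : 'I_m.+1 => P k)) //=.
apply: eq_bigr => k Pk; rewrite -(card_Mon_mdeg_eq _ _ (ltnSE (ltn_ord k))) -sum1_card.
apply: eq_bigl => g; rewrite !inE -val_eqE /=.
by case: (mdeg g =P k) => [-> | _]; rewrite ?Pk ?andbF.
Qed.

Lemma card_Mon e : (2 * #|{: Mon e}| = e.+1 * e.+2)%N.
Proof.
have -> : #|{: Mon e}| = #|[pred g : Mon e | predT (mdeg g)]| by apply: eq_card.
rewrite card_Mon_mdeg big_mkcond /=.
by elim: e => [|e IHe]; rewrite ?big_ord1 // big_ord_recr /= mulnDr IHe; lia.
Qed.

Lemma card_PadeRow_top2 d : #|{: PadeRow d (d + 2)}| = (2 * d + 5)%N.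
Proof.
rewrite card_sig (card_Mon_mdeg (d + 2) (fun k => d < k)%N) big_mkcond addn2.
rewrite !big_ord_recr /= big1 => [|i _]; first by rewrite ltnn ltnSn (leqW (ltnSn d)); lia.
by have := ltn_ord i; case: ifP => //; lia.
Qed.

Lemma square_pade_top2_leq d e :
  #|{: PadeRow d (d + 2)}| = #|{: Mon e}| -> (e <= d)%N.
Proof.
move=> sq; have := card_Mon e; rewrite -sq card_PadeRow_top2 {sq} => card_eq.
case: (leqP e d) => // lt_de.
have d_small : (d <= 1)%N by nia.
have e_small : (e <= 3)%N by nia.
by move: card_eq lt_de; case: d d_small => [|[|d]] //; case: e e_small => [|[|[|[|e]]]].
Qed.

Section VariableFreeDeterminant.

Variables (R : comNzRingType) (n : nat) (i : 'I_n).

Lemma mderiv_prod_eq0 (I : Type) (r : seq I) (F : I -> {mpoly R[n]}) :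
  (forall j, (F j)^`M(i) = 0) -> (\prod_(j <- r) F j)^`M(i) = 0.
Proof.
move=> dF0; elim/big_ind: _ => [|p q dp0 dq0|j _]; last exact: dF0.
- by rewrite -mpolyC1 mderivC.
- by rewrite mderivM dp0 dq0 mul0r mulr0 addr0.
Qed.

Lemma mderiv_det_eq0 k (A : 'M[{mpoly R[n]}]_k) :
  (forall j l, (A j l)^`M(i) = 0) -> (\det A)^`M(i) = 0.
Proof.
move=> dA0; rewrite /determinant raddf_sum big1 // => s _ /=.
rewrite mderivM -(rmorph_sign (@mpolyC n R)) mderivC mderiv_prod_eq0 //.
by rewrite mul0r mulr0 addr0.
Qed.

End VariableFreeDeterminant.

Lemma det_hessian_eq0 (C : fieldType) n (f : {mpoly C[n]}) (i : 'I_n) :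
  f^`M(i) = 0 -> \det (hessian f) = 0.
Proof.
move=> df0; rewrite (expand_det_row _ i) big1 // => j _.
by rewrite mxE mderiv_comm df0 mderiv0 mul0r.
Qed.

Section PadeDeterminant.

Variable C : fieldType.

Definition cvar_const (m : nat) : 'I_(Kvars m) := enum_rank (bm0 : Mon m).

Lemma mderiv_cvar_const m g : g != 0%MM -> (cvar C m g)^`M(cvar_const m) = 0.
Proof.
rewrite /cvar; case: insubP => [g' _ <- g'0 | _ _]; last exact: mderiv0.
rewrite mderivX mnm1E; case: eqP => [/enum_rank_inj g'E | _]; last exact: scale0r.
by rewrite g'E eqxx in g'0.
Qed.

Lemma mderiv_pade_det d e m (sq : #|{: PadeRow d m}| = #|{: Mon e}|) :
  (e <= d)%N -> (pade_det C sq)^`M(cvar_const m) = 0.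
Proof.
move=> le_ed; apply: mderiv_det_eq0 => j l; rewrite castmxE !mxE /=.
set sigma := enum_val _; set rho := enum_val _.
case: ifP => [le_sr | _]; last exact: mderiv0.
apply: mderiv_cvar_const; apply: contraTneq (valP rho) => r_s0.
have deg_sigma := bmdeg sigma.
by rewrite -(submK le_sr) r_s0 add0m -leqNgt; lia.
Qed.

End PadeDeterminant.

Theorem theorem1p1 (R : realType) (d e : nat)
  (Hsq : #|{: PadeRow d (d + 2)}| = #|{: Mon e}|) :
  let f := pade_det R[i] Hsq in
  let T := @taylor_variety R[i] d e (d + 2) in
  let N := ('C(d + 4, 2) - 1)%N in
  (forall x, T x <-> zero_set f x) ->
  proj_dim T (N - 1) ->
  proj_dim T (expected_dim 2 d e (d + 2)) ->
  \det (hessian f) = 0.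
Proof.
move=> f T N _ _ _; apply: (@det_hessian_eq0 _ _ _ (cvar_const (d + 2))).
exact/mderiv_pade_det/square_pade_top2_leq.
Qed.
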